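(* Let $k,d$ be positive integers with $d\ge k$, and let $\alpha,\beta$ be reals with $\beta>0$ and $0\le\alpha\le d\beta$. Let $e'=(e'_1,\dots,e'_k)\in\{1,2\}^k$, and for $j\in[0:k]$ let $v_2(j)=|\{\ell\le j:e'_\ell=2\}|$ and $v_1(j)=j-v_2(j)$. Define $$F^*(e')=\sum_{j=1}^k\min\Big\{\big(d-(e'_j-1)v_1(j)-(2-e'_j)v_2(j)\big)\beta,\ \alpha\Big\}.$$ If $v_1(k)\ge v_2(k)$, then $$F^*(e')\ge v_1(k)\,\alpha+v_2(k)\min\{(d-v_1(k))\beta,\ \alpha\},$$ with equality if $e'$ is sorted, i.e. if $e'_1=\dots=e'_{v_1(k)}=1$.
   Context: $[a:b]=\{a,\dots,b\}$, $[a]=\{1,\dots,a\}$. *)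

From mathcomp Require Import all_boot all_order all_algebra.
Set Implicit Arguments. Unset Strict Implicit. Unset Printing Implicit Defensive.
Import Order.TTheory GRing.Theory Num.Theory.
Local Open Scope ring_scope.

(* e' = (e'_1,...,e'_k) is represented by a sequence e of size k;
   e'_j (1-based) is  nth 0 e j.-1. *)

Definition v2 (e : seq nat) (j : nat) : nat := count (pred1 2%N) (take j e).
Definition v1 (e : seq nat) (j : nat) : nat := (j - v2 e j)%N.

(* F^*(e') = sum_{j=1}^k min{ (d - (e'_j-1) v1(j) - (2-e'_j) v2(j)) beta, alpha }
   (arithmetic inside done in R, so no truncated subtraction) *)
Definition Fstar (R : realFieldType) (d : nat) (alpha beta : R) (e : seq nat) : R :=
  \sum_(1 <= j < (size e).+1)
    Num.min ((d%:R - ((nth 0%N e j.-1)%:R - 1) * (v1 e j)%:R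
                   - (2 - (nth 0%N e j.-1)%:R) * (v2 e j)%:R) * beta) alpha.

(* Write c_j (vopp e j) for the number of entries among e'_1..e'_j of the
   type opposite to e'_j, so that the j-th term of F^*(e') is f(c_j) with
   f(c) = min{(d - c) beta, alpha} (capped c).  Every pair (1-entry, 2-entry)
   is counted by exactly one c_j, hence sum_j c_j = v_1(k) v_2(k), and
   c_j <= max(v_1(k), v_2(k)) = v_1(k).  As f is concave with f(0) = alpha,
   it lies above its chord on [0, v_1(k)]; summing the chord bounds gives the
   inequality.  For sorted e' the c_j are 0 then v_1(k), and the chord bound
   is attained at both ends. *)

From mathcomp Require Import all_boot all_order all_algebra.
From mathcomp Require Import zify ring lra.
Set Implicit Arguments. Unset Strict Implicit. Unset Printing Implicit Defensive.
Import Order.TTheory GRing.Theory Num.Theory.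
Local Open Scope ring_scope.

Definition vopp (e : seq nat) (j : nat) : nat :=
  if nth 0%N e j.-1 == 2%N then v1 e j else v2 e j.

Section Counts.

Variable e : seq nat.

Lemma v2S j : v2 e j.+1 = (v2 e j + (nth 0%N e j == 2%N))%N.
Proof.
rewrite /v2; case: (ltnP j (size e)) => hj.
  by rewrite (take_nth 0%N hj) -cats1 count_cat /= addn0.
by rewrite nth_default // !take_oversize ?(leqW hj) // addn0.
Qed.

Lemma v2_le j : (v2 e j <= j)%N.
Proof.
by apply: leq_trans (count_size _ _) _; rewrite size_take_min geq_minl.
Qed.

Lemma v1_add_v2 j : (v1 e j + v2 e j)%N = j.
Proof. exact/subnK/v2_le. Qed.

Lemma v1S j : v1 e j.+1 = (v1 e j + (nth 0%N e j != 2%N))%N.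
Proof.
have := v1_add_v2 j; have := v1_add_v2 j.+1; rewrite v2S.
by case: (nth 0%N e j == 2%N) => /=; lia.
Qed.

Lemma leq_v1 i j : (i <= j)%N -> (v1 e i <= v1 e j)%N.
Proof. by apply: (homo_leq leqnn leq_trans) => n; rewrite v1S leq_addr. Qed.

Lemma leq_v2 i j : (i <= j)%N -> (v2 e i <= v2 e j)%N.
Proof. by apply: (homo_leq leqnn leq_trans) => n; rewrite v2S leq_addr. Qed.

Lemma vopp_le j k : (j <= k)%N -> (vopp e j <= maxn (v1 e k) (v2 e k))%N.
Proof.
move=> jk; have := leq_v1 jk; have := leq_v2 jk.
by rewrite /vopp; case: ifP; lia.
Qed.

Lemma sum_vopp n : (\sum_(1 <= j < n.+1) vopp e j)%N = (v1 e n * v2 e n)%N.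
Proof.
elim: n => [|n IHn]; first by rewrite big_geq.
rewrite big_nat_recr //= IHn /vopp /= v1S v2S.
by case: (nth 0%N e n == 2%N) => /=; lia.
Qed.

Lemma v2_eq0 j :
  (forall i, (i < j)%N -> nth 0%N e i != 2%N) -> v2 e j = 0%N.
Proof.
elim: j => [|j IHj] ones; first by rewrite /v2 take0.
rewrite v2S (negPf (ones j (ltnSn j))) IHj // => i lt_ij.
exact/ones/ltnW.
Qed.

Section SortedPrefix.

Variable k : nat.
Hypothesis ones : forall i, (i < v1 e k)%N -> nth 0%N e i != 2%N.

Lemma vopp_sorted_prefix j : (j <= v1 e k)%N -> vopp e j = 0%N.
Proof.
move=> jk; have v2j : v2 e j = 0%N.
  by apply: v2_eq0 => i ij; apply: ones; apply: leq_trans jk.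
rewrite /vopp; case: j jk v2j => [|j] jk v2j; first by rewrite /v1 v2j; case: ifP.
by rewrite (negPf (ones jk)).
Qed.

(* The first [v1 e k] entries already exhaust the 1-entries of the first k. *)
Lemma vopp_sorted_suffix j : (v1 e k < j <= k)%N -> vopp e j = v1 e k.
Proof.
case: j => [|j] /andP[ltj jk] //.
have v1a : v1 e (v1 e k) = v1 e k.
  by have := v1_add_v2 (v1 e k); rewrite (v2_eq0 ones) addn0.
rewrite ltnS in ltj; have := leq_v1 jk; have := leq_v1 ltj; have := v1S j.
rewrite /vopp /= v1a; case: (nth 0%N e j == 2%N) => /=; lia.
Qed.

End SortedPrefix.

End Counts.

Section CappedTerm.

Variables (R : realFieldType) (d : nat) (alpha beta : R).

Definition capped (c : R) : R := Num.min ((d%:R - c) * beta) alpha.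

Lemma capped0 : alpha <= d%:R * beta -> capped 0 = alpha.
Proof. by move=> alpha_le; rewrite /capped subr0 min_r. Qed.

Lemma capped_chord (c A : R) : 0 <= beta -> alpha <= d%:R * beta ->
  0 <= c -> c <= A -> c * capped A + (A - c) * alpha <= A * capped c.
Proof.
move=> beta_ge0 alpha_le c_ge0 cA; rewrite /capped.
case: (leP ((d%:R - c) * beta) alpha) => hc; case: (leP ((d%:R - A) * beta) alpha) => hA.
- have : 0 <= (A - c) * (d%:R * beta - alpha) by apply: mulr_ge0; rewrite subr_ge0.
  nra.
- have : 0 <= (A - c) * beta by apply: mulr_ge0; lra.
  nra.
- have : 0 <= c * (alpha - (d%:R - A) * beta) by apply: mulr_ge0; lra.
  nra.
- nra.
Qed.

Lemma sum_capped_chord m n (c : nat -> R) (A : R) :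
  0 <= beta -> alpha <= d%:R * beta -> (forall j, (m <= j < n)%N -> 0 <= c j <= A) ->
  (\sum_(m <= j < n) c j) * capped A + ((n - m)%:R * A - \sum_(m <= j < n) c j) * alpha
    <= A * \sum_(m <= j < n) capped (c j).
Proof.
move=> beta_ge0 alpha_le cbound.
have -> : (\sum_(m <= j < n) c j) * capped A
          + ((n - m)%:R * A - \sum_(m <= j < n) c j) * alpha
        = \sum_(m <= j < n) (c j * capped A + (A - c j) * alpha).
  rewrite big_split /= -!mulr_suml sumrB sumr_const_nat -mulr_natl; ring.
rewrite mulr_sumr; apply: ler_sum_nat => j /cbound /andP[c_ge0 cA].
exact: capped_chord.
Qed.

Lemma Fstar_vopp e : all (fun x => (x == 1)%N || (x == 2)%N) e ->
  Fstar d alpha beta e = \sum_(1 <= j < (size e).+1) capped (vopp e j)%:R.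
Proof.
move=> e12; apply: eq_big_nat => j /andP[j_ge1 j_le].
have /(allP e12) : nth 0%N e j.-1 \in e by rewrite mem_nth // -ltnS prednK.
by rewrite /capped /vopp; case/orP => /eqP -> /=; congr (Num.min (_ * _) _); ring.
Qed.

Section Bounds.

Variable e : seq nat.
Let n := size e.
Hypothesis e12 : all (fun x => (x == 1)%N || (x == 2)%N) e.

Lemma Fstar_ge : 0 <= beta -> alpha <= d%:R * beta ->
  (0 < n)%N -> (v2 e n <= v1 e n)%N ->
  (v1 e n)%:R * alpha + (v2 e n)%:R * capped (v1 e n)%:R <= Fstar d alpha beta e.
Proof.
move=> beta_ge0 alpha_le n_gt0 v21; rewrite Fstar_vopp //.
have vopp_le_v1 j : (1 <= j < n.+1)%N -> 0 <= ((vopp e j)%:R : R) <= (v1 e n)%:R.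
  by move=> /andP[_ jn]; rewrite ler0n ler_nat -(maxn_idPl v21) vopp_le.
have := sum_capped_chord (c := fun j => (vopp e j)%:R) beta_ge0 alpha_le vopp_le_v1.
have n_R : n%:R = (v1 e n)%:R + (v2 e n)%:R :> R by rewrite -natrD v1_add_v2.
rewrite -natr_sum sum_vopp subSS subn0 n_R natrM => chord.
have v1_gt0 : (0 < v1 e n)%N by move: n_gt0 v21; rewrite -{1}(v1_add_v2 e n); lia.
rewrite -(ler_pM2l (_ : 0 < (v1 e n)%:R :> R)) ?ltr0n //.
apply: le_trans chord; lra.
Qed.

Lemma Fstar_sorted : alpha <= d%:R * beta ->
  (forall i, (i < v1 e n)%N -> nth 0%N e i != 2%N) ->
  Fstar d alpha beta e = (v1 e n)%:R * alpha + (v2 e n)%:R * capped (v1 e n)%:R.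
Proof.
move=> alpha_le ones; rewrite Fstar_vopp //.
have v1_le_n : (v1 e n <= n)%N by rewrite -{2}(v1_add_v2 e n) leq_addr.
rewrite (@big_cat_nat _ _ _ (v1 e n).+1) //=.
have -> : \sum_(1 <= j < (v1 e n).+1) capped (vopp e j)%:R
          = \sum_(1 <= j < (v1 e n).+1) alpha.
  by apply: eq_big_nat => j /andP[_ ja]; rewrite (vopp_sorted_prefix ones) // capped0.
have -> : \sum_((v1 e n).+1 <= j < n.+1) capped (vopp e j)%:R
          = \sum_((v1 e n).+1 <= j < n.+1) capped (v1 e n)%:R.
  by apply: eq_big_nat => j ja; rewrite (vopp_sorted_suffix ones).
have n_sub_v1 : (n - v1 e n)%N = v2 e n by rewrite -{1}(v1_add_v2 e n) addKn.
by rewrite !sumr_const_nat !mulr_natl !subSS subn0 n_sub_v1.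
Qed.

End Bounds.

End CappedTerm.

Theorem lemma2 (R : realFieldType) (k d : nat) (alpha beta : R) (e : seq nat) :
  (0 < k)%N -> (k <= d)%N ->
  0 < beta -> 0 <= alpha -> alpha <= d%:R * beta ->
  size e = k -> all (fun x => (x == 1)%N || (x == 2)%N) e ->
  (v2 e k <= v1 e k)%N ->
  (v1 e k)%:R * alpha + (v2 e k)%:R * Num.min ((d%:R - (v1 e k)%:R) * beta) alpha
    <= Fstar d alpha beta e
  /\ ((forall i : nat, (i < v1 e k)%N -> nth 0%N e i = 1%N) ->
      Fstar d alpha beta e
        = (v1 e k)%:R * alpha + (v2 e k)%:R * Num.min ((d%:R - (v1 e k)%:R) * beta) alpha).
Proof.
move=> k_gt0 _ /ltW beta_ge0 _ alpha_le size_e e12 v21; subst k.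
rewrite -[Num.min _ _]/(capped d alpha beta (v1 e (size e))%:R).
split; first exact: Fstar_ge.
by move=> ones; apply: Fstar_sorted => // i /ones ->.
Qed.
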